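(* Assume $n\ge 3t+1$. In any execution of COOL, if $\eta^{[2]}=2$ then $\eta^{[3]}\le 1$.
   Context: Setting. $n$ processors indexed by $[1:n]$, pairwise joined by reliable private synchronous channels; recipients know senders. At most $t$ processors are dishonest, controlled by an adversary who may make them deviate arbitrarily (missing values replaced by a fixed default); the others are honest. Processor $i$ holds an $\ell$-bit initial message $\boldsymbol w_i$. $\phi$ is a default value different from every $\ell$-bit message. Logarithms are base 2. Code. $k=\lfloor t/5\rfloor+1$, $c=\lceil \max\{\ell,(t/5+1)\log(n+1)\}/k\rceil$. Messages are zero-padded to $kc$ bits and viewed in $GF(2^c)^k$. Integers in $[1:n]$ are identified with distinct nonzero elements of $GF(2^c)$; $\boldsymbol h_i\in GF(2^c)^k$ has entries $h_{i,j}=\prod_{p\in[1:k],\,p\ne j}\frac{i-p}{j-p}$ (field arithmetic). COOL, Phases 1–3 (honest processor $i$). Initialization: updated message $\boldsymbol w^{(i)}:=\boldsymbol w_i$, $y^{(i)}_j:=\boldsymbol h_j^{\mathsf T}\boldsymbol w_i$, $u_i(i):=1$. Phase 1. (a) Send $(y^{(i)}_j,y^{(i)}_i)$ to each $j\ne i$. (b) For $j\ne i$, link indicator $u_i(j):=1$ if the pair received from $j$ equals $(y^{(i)}_i,y^{(i)}_j)$, else $0$. Success indicator $s_i:=1$ if $\sum_{j=1}^n u_i(j)\ge n-t$; otherwise $s_i:=0$ and $\boldsymbol w^{(i)}:=\phi$. (c) Send $s_i$ to all; each processor records the indicator received from each $j$ (own for itself) and forms $\mathcal S_1=\{j:s_j=1\}$,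 $\mathcal S_0=\{j:s_j=0\}$ (views may differ between processors). Phase 2. If $s_i=1$: set $u_i(j):=0$ for all $j\in\mathcal S_0$; if now $\sum_j u_i(j)<n-t$, set $s_i:=0$, $\boldsymbol w^{(i)}:=\phi$ and send $s_i=0$ to all. Everyone overwrites recorded indicators with newly received ones and recomputes $\mathcal S_0,\mathcal S_1$. Phase 3 begins by repeating the steps of Phase 2 once more (followed by a vote and binary agreement, irrelevant here). Notation. For $p\in\{1,2,3\}$, $s^{[p]}_i$ is the value of honest processor $i$'s success indicator at the end of (the indicator-updating steps of) Phase $p$, and $\eta^{[p]}$ is the number of distinct values in $\{\boldsymbol w_i: i\text{ honest},\ s^{[p]}_i=1\}$ (initial messages). *)

From HB Require Import structures.
From mathcomp Require Import all_boot all_order all_algebra all_field.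
Set Implicit Arguments. Unset Strict Implicit. Unset Printing Implicit Defensive.
Import GRing.Theory.
Local Open Scope ring_scope.

Definition kk (t : nat) : nat := (t %/ 5 + 1)%N.

(* c = ceil( max{l, (t/5+1) log2(n+1)} / k ), characterized exactly:
   c is the least natural number with  k*c >= l  and  k*c >= ((t+5)/5) log2(n+1),
   the latter being equivalent to  2^(5 k c) >= (n+1)^(t+5). *)
Definition c_ok (t n l c : nat) : bool :=
  (l <= kk t * c)%N && ((n.+1) ^ (t + 5) <= 2 ^ (5 * (kk t * c)))%N.
Definition is_c (t n l c : nat) : Prop :=
  c_ok t n l c /\ forall c', c_ok t n l c' -> (c <= c')%N.

Section Cool.
Variables (F : fieldType) (t n l c : nat) (alpha : nat -> F).
Local Notation k := (kk t).

(* Messages are l-bit strings; zero-padded to k*c bits (nth false beyond l),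
   cut into k blocks of c bits, each block identified with an element of
   GF(2^c) through the bijection toF. *)
Definition enc (toF : c.-tuple bool -> F) (w : l.-tuple bool) (m : 'I_k) : F :=
  toF [tuple nth false w (m * c + b) | b < c].

(* h_{i,j} = prod_{p in [1:k], p <> j} (i - p)/(j - p), where processor labels
   are identified with field elements via alpha.  Here i is the label (1-based),
   j : 'I_k stands for label j+1. *)
Definition hcoef (i : nat) (j : 'I_k) : F :=
  \prod_(p < k | p != j) ((alpha i - alpha p.+1) / (alpha j.+1 - alpha p.+1)).

Definition code_sym (x : 'I_k -> F) (i : nat) : F :=
  \sum_(m < k) hcoef i m * x m.

(* An execution: processors are 'I_n, processor i has label i+1.
   H = set of honest processors; w = initial messages; adv1 j i = pair sent by
   dishonest j to i in Phase 1(a); adv2 j i / adv3 j i = indicator recorded by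
   i for dishonest j after Phase 1(c) / after Phase 2. *)
Variables (toF : c.-tuple bool -> F) (w : 'I_n -> l.-tuple bool)
  (H : {set 'I_n}) (adv1 : 'I_n -> 'I_n -> F * F) (adv2 adv3 : 'I_n -> 'I_n -> bool).

Definition yv (i j : 'I_n) : F := code_sym (enc toF (w i)) j.+1.

Definition recv1 (i j : 'I_n) : F * F :=
  if j \in H then (yv j i, yv j j) else adv1 j i.

Definition u1 (i j : 'I_n) : bool := (j == i) || (recv1 i j == (yv i i, yv i j)).

Definition s1 (i : 'I_n) : bool := (n - t <= #|[pred j | u1 i j]|)%N.

Definition rec1 (i j : 'I_n) : bool :=
  if j == i then s1 i else if j \in H then s1 j else adv2 j i.

Definition u2 (i j : 'I_n) : bool := u1 i j && rec1 i j.
Definition s2 (i : 'I_n) : bool := s1 i && (n - t <= #|[pred j | u2 i j]|)%N.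

Definition rec2 (i j : 'I_n) : bool :=
  if j == i then s2 i else if j \in H then s2 j else adv3 j i.

Definition u3 (i j : 'I_n) : bool := u2 i j && rec2 i j.
Definition s3 (i : 'I_n) : bool := s2 i && (n - t <= #|[pred j | u3 i j]|)%N.

Definition eta_count (s : 'I_n -> bool) : nat := #|[set w i | i in H & s i]|.

End Cool.

From Pilot Require Import Defs.
From HB Require Import structures.
From mathcomp Require Import all_boot all_order all_algebra all_field.
From mathcomp Require Import zify.
Set Implicit Arguments. Unset Strict Implicit. Unset Printing Implicit Defensive.
Import GRing.Theory.
Local Open Scope ring_scope.

(* The symbols y_j = h_j^T w are the values at alpha j of the interpolation polynomial of
   degree < k through the k blocks of w, so two distinct messages agree at no more than
   k - 1 = t/5 processors.  An honest processor i accepts the link to an honest j only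
   if their codewords agree at both i and j.  Suppose honest processors holding distinct
   messages a and b both survive Phase 3, while every honest survivor of Phase 2 holds
   a or b.  Each then has n - t links to dishonest processors, to Phase-2 survivors
   holding its own message, or to processors where the codewords of a and b agree.
   Counting these links shows that every honest survivor of Phase 1 holds a or b, and
   that some Phase-2 survivor with message a lies outside the agreement set of a and b;
   its n - t Phase-2 links then go only to dishonest processors and Phase-1 survivors
   holding a.  The same holds for b, and the two disjoint sets of honest processors
   are too large for n >= 3t + 1. *)

Section Code.
Variables (F : fieldType) (t : nat) (alpha : nat -> F).
Local Notation k := (kk t).

Definition lagrange_poly (x : 'I_k -> F) : {poly F} :=
  \sum_(q < k) (x q * \prod_(r < k | r != q) (alpha q.+1 - alpha r.+1)^-1) *:
     \prod_(r < k | r != q) ('X - (alpha r.+1)%:P).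

Lemma horner_lagrange_poly x i : (lagrange_poly x).[alpha i] = code_sym alpha x i.
Proof.
rewrite horner_sum; apply: eq_bigr => q _.
rewrite hornerZ horner_prod -mulrA mulrC; congr (_ * _).
by rewrite /hcoef -big_split; apply: eq_bigr => r _; rewrite hornerXsubC mulrC.
Qed.

Lemma size_lagrange_poly x : (size (lagrange_poly x) <= k)%N.
Proof.
apply: leq_trans (size_sum _ _ _) _; apply/bigmax_leqP => q _.
apply: leq_trans (size_scale_leq _ _) _.
rewrite -big_filter size_prod_XsubC size_filter.
have -> : count (predC1 q) (index_enum 'I_k) = #|predC1 q|.
  by rewrite cardE /enum_mem size_filter.
by rewrite cardC1 card_ord /kk addn1.
Qed.

Lemma code_symB (x y : 'I_k -> F) i :
  code_sym alpha (fun q => x q - y q) i = code_sym alpha x i - code_sym alpha y i.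
Proof. by rewrite /code_sym -sumrB; apply: eq_bigr => q _; rewrite mulrBr. Qed.

Hypothesis alpha_inj : injective (fun q : 'I_k => alpha q.+1).

Lemma hcoef_node (q m : 'I_k) : hcoef alpha q.+1 m = (m == q)%:R.
Proof.
have [->|neq] := eqVneq m q; last first.
  by rewrite /hcoef (bigD1 q) 1?eq_sym //= subrr !mul0r.
rewrite /hcoef big1 // => r rq; rewrite divff // subr_eq0.
by apply: contra rq => /eqP/alpha_inj ->.
Qed.

Lemma code_sym_node (x : 'I_k -> F) (q : 'I_k) : code_sym alpha x q.+1 = x q.
Proof.
rewrite /code_sym (bigD1 q) //= big1 => [|m mq].
  by rewrite hcoef_node eqxx mul1r addr0.
by rewrite hcoef_node (negbTE mq) mul0r.
Qed.

Lemma lagrange_poly_eq0 (x : 'I_k -> F) : lagrange_poly x = 0 -> forall q, x q = 0.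
Proof. by move=> x0 q; rewrite -code_sym_node -horner_lagrange_poly x0 horner0. Qed.

Lemma card_code_sym_roots n (x : 'I_k -> F) :
  injective (fun p : 'I_n => alpha p.+1) -> (exists q, x q != 0) ->
  (#|[set p : 'I_n | code_sym alpha x p.+1 == 0%R]| <= t %/ 5)%N.
Proof.
move=> alpha_inj_n [q xq].
have P0 : lagrange_poly x != 0 by apply: contraNneq xq => /lagrange_poly_eq0 ->.
set D := [set p : 'I_n | _].
set rs := [seq alpha p.+1 | p : 'I_n <- enum D].
have rs_roots : all (root (lagrange_poly x)) rs.
  by apply/allP => y /mapP [p]; rewrite mem_enum inE => ? ->; rewrite /root horner_lagrange_poly.
have rs_uniq : uniq rs by rewrite (map_inj_uniq alpha_inj_n) enum_uniq.
have := leq_trans (max_poly_roots P0 rs_roots rs_uniq) (size_lagrange_poly x).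
by rewrite size_map -cardE /kk addn1 ltnS.
Qed.

End Code.

Lemma eq_enc_inj (F : fieldType) (t l c : nat) (toF : c.-tuple bool -> F) (m m' : l.-tuple bool) :
  injective toF -> (l <= kk t * c)%N ->
  (forall q : 'I_(kk t), enc toF m q = enc toF m' q) -> m = m'.
Proof.
move=> toF_inj l_le eq_mm'; apply: eq_from_tnth => i.
have i_lt : (i < kk t * c)%N := leq_trans (ltn_ord i) l_le.
have c_gt0 : (0 < c)%N by case: (c) i_lt; rewrite ?muln0.
have q_lt : (i %/ c < kk t)%N by rewrite ltn_divLR // mulnC.
have b_lt : (i %% c < c)%N by rewrite ltn_pmod.
move/toF_inj/(congr1 (fun u => tnth u (Ordinal b_lt))): (eq_mm' (Ordinal q_lt)).
by rewrite !tnth_mktuple /= -divn_eq !(tnth_nth false).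
Qed.

Lemma card_le_dishonest (T : finType) (H X : {set T}) (P : pred T) :
  {in H, forall j, P j -> j \in X} -> (#|[pred j | P j]| <= #|~: H| + #|X|)%N.
Proof.
move=> PX; apply: leq_trans (leq_card_setU _ _); apply: subset_leq_card.
by apply/subsetP => j; rewrite !inE; case: (boolP (j \in H)) => // /PX.
Qed.

Section Execution.
Variables (F : fieldType) (t n l c : nat) (alpha : nat -> F) (toF : c.-tuple bool -> F)
  (w : 'I_n -> l.-tuple bool) (H : {set 'I_n})
  (adv1 : 'I_n -> 'I_n -> F * F) (adv2 adv3 : 'I_n -> 'I_n -> bool).

Hypotheses (n_gt3t : (3 * t + 1 <= n)%N)
  (label_inj : injective (fun p : 'I_n => alpha p.+1))
  (toF_inj : injective toF) (l_le : (l <= kk t * c)%N)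
  (dishonest_le : (#|~: H| <= t)%N).

Local Notation u1 := (u1 t alpha toF w H adv1).
Local Notation s1 := (s1 t alpha toF w H adv1).
Local Notation s2 := (s2 t alpha toF w H adv1 adv2).
Local Notation s3 := (s3 t alpha toF w H adv1 adv2 adv3).
Local Notation code m p := (code_sym (t := t) alpha (enc toF m) (nat_of_ord p).+1).

Definition agreement (m m' : l.-tuple bool) : {set 'I_n} := [set p | code m p == code m' p].

Definition holders (s : 'I_n -> bool) (m : l.-tuple bool) : {set 'I_n} :=
  [set j in H | s j && (w j == m)].

Definition two_valued (s : 'I_n -> bool) (a b : l.-tuple bool) : Prop :=
  {in H, forall j, s j -> (w j == a) || (w j == b)}.

Lemma two_valuedC s a b : two_valued s a b -> two_valued s b a.
Proof. by move=> ab j hj sj; rewrite orbC ab. Qed.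

Lemma card_honest : (#|H| + #|~: H| = n)%N.
Proof. by rewrite cardsC card_ord. Qed.

Lemma card_agreement m m' : m != m' -> (#|agreement m m'| <= t %/ 5)%N.
Proof.
move=> neq.
have k_le : (kk t <= n)%N by rewrite /kk; lia.
have label_inj_k : injective (fun q : 'I_(kk t) => alpha q.+1).
  move=> q r eq_qr; apply/val_inj.
  by have /(congr1 val) := @label_inj (widen_ord k_le q) (widen_ord k_le r) eq_qr.
have nz : exists q : 'I_(kk t), enc toF m q - enc toF m' q != 0.
  case: (pickP (fun q : 'I_(kk t) => enc toF m q != enc toF m' q)) => [q | eq_enc].
    by exists q; rewrite subr_eq0.
  by case/eqP: neq; apply: (eq_enc_inj toF_inj l_le) => q; apply/eqP/negbFE/eq_enc.
have -> : agreement m m' =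
    [set p : 'I_n | code_sym (t := t) alpha (fun q => enc toF m q - enc toF m' q) p.+1 == 0%R].
  by apply/setP => p; rewrite !inE code_symB subr_eq0.
exact: card_code_sym_roots.
Qed.

Lemma u1_agreement i j : i \in H -> j \in H -> u1 i j ->
  (i \in agreement (w i) (w j)) && (j \in agreement (w i) (w j)).
Proof.
move=> hi hj; rewrite /Defs.u1 /recv1 /yv hj !inE.
by case: eqVneq => [-> _|_ /= /eqP [-> ->]]; rewrite !eqxx.
Qed.

Lemma card_holders_partition s a b : a != b ->
  (#|holders s a| + #|holders s b| + #|H :\: (holders s a :|: holders s b)| = #|H|)%N.
Proof.
move=> neq; rewrite -(cardsID (holders s a :|: holders s b) H).
have /setIidPr -> : holders s a :|: holders s b \subset H.
  by rewrite subUset; apply/andP; split; apply/subsetP => j; rewrite inE => /andP [].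
rewrite cardsU; suff -> : holders s a :&: holders s b = set0 by rewrite cards0 subn0.
by apply/setP => j; rewrite !inE; case: (w j =P a) => [->|_]; rewrite ?(negbTE neq) !andbF.
Qed.

Lemma s3_holders_bound i x y : i \in H -> s3 i -> w i = x -> two_valued s2 x y ->
  (n - t <= #|~: H| + (#|holders s2 x| + #|agreement x y|))%N.
Proof.
move=> hi s3i wi xy; case/andP: (s3i) => s2i /leq_trans; apply.
apply: leq_trans (card_le_dishonest (H := H) (X := holders s2 x :|: agreement x y) _) _; last first.
  by rewrite leq_add2l leq_card_setU.
move=> j hj /andP [/andP [u1ij _] r2].
case: (eqVneq j i) => [->|ji]; first by rewrite !inE hi s2i wi eqxx.
move: r2; rewrite /rec2 (negbTE ji) hj => s2j.
case/orP: (xy j hj s2j) => [wj | /eqP wj]; first by rewrite !inE hj s2j wj.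
by case/andP: (u1_agreement hi hj u1ij) => _; rewrite wi wj in_setU => ->; rewrite orbT.
Qed.

Lemma s2_holders_bound j x y : j \in H -> s2 j -> w j = x -> j \notin agreement x y ->
  two_valued s1 x y -> (n - t <= #|~: H| + #|holders s1 x|)%N.
Proof.
move=> hj s2j wj nxy xy; case/andP: (s2j) => s1j /leq_trans; apply.
apply: card_le_dishonest => z hz /andP [u1jz r1].
case: (eqVneq z j) => [->|zj]; first by rewrite inE hj s1j wj eqxx.
move: r1; rewrite /rec1 (negbTE zj) hz => s1z.
rewrite inE hz s1z /=; case/orP: (xy z hz s1z) => // /eqP wz.
by case/andP: (u1_agreement hj hz u1jz); rewrite wj wz (negbTE nxy).
Qed.

Lemma s1_two_valued a b : a != b ->
  (n - t <= #|~: H| + (#|holders s2 a| + #|agreement a b|))%N ->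
  (n - t <= #|~: H| + (#|holders s2 b| + #|agreement b a|))%N ->
  two_valued s1 a b.
Proof.
move=> neq ha hb z hz s1z; apply/negPn/negP; rewrite negb_or => /andP [za zb].
set R := H :\: (holders s2 a :|: holders s2 b).
have hz_bound :
    (n - t <= #|~: H| + (#|R| + #|agreement (w z) a| + #|agreement (w z) b|))%N.
  move: s1z => /leq_trans; apply.
  apply: leq_trans (card_le_dishonest (H := H)
    (X := R :|: agreement (w z) a :|: agreement (w z) b) _) _; last first.
    rewrite leq_add2l; apply: leq_trans (leq_card_setU _ _) _.
    by rewrite leq_add2r leq_card_setU.
  move=> j hj u1zj; case/andP: (u1_agreement hz hj u1zj) => _ agr.
  rewrite !in_setU in_setD in_setU hj andbT.
  case: (boolP (j \in holders s2 a)) => [|_].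
    by rewrite inE => /and3P [_ _ /eqP wj]; rewrite -wj agr orbT.
  case: (boolP (j \in holders s2 b)) => [|//].
  by rewrite inE => /and3P [_ _ /eqP wj]; rewrite -wj agr orbT.
have := card_holders_partition s2 neq; rewrite -/R; have := card_honest.
have nba : b != a by rewrite eq_sym.
have := card_agreement neq; have := card_agreement nba.
have := card_agreement za; have := card_agreement zb.
lia.
Qed.

Lemma holder_off_agreement x y : x != y ->
  (n - t <= #|~: H| + (#|holders s2 x| + #|agreement x y|))%N ->
  exists2 j, j \in holders s2 x & j \notin agreement x y.
Proof.
move=> neq hx; apply/subsetPn/negP => /subset_leq_card sub.
have := card_agreement neq; lia.
Qed.

Lemma s3_values_eq i j : i \in H -> j \in H -> s3 i -> s3 j ->
  two_valued s2 (w i) (w j) -> w i = w j.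
Proof.
move=> hi hj s3i s3j s2ij; apply/eqP/negPn/negP => neq.
have nji : w j != w i by rewrite eq_sym.
have hbi := s3_holders_bound hi s3i erefl s2ij.
have hbj := s3_holders_bound hj s3j erefl (two_valuedC s2ij).
have s1ij := s1_two_valued neq hbi hbj.
have [i' + ni'] := holder_off_agreement neq hbi.
rewrite inE => /and3P [hi' s2i' /eqP wi'].
have [j' + nj'] := holder_off_agreement nji hbj.
rewrite inE => /and3P [hj' s2j' /eqP wj'].
have := s2_holders_bound hi' s2i' wi' ni' s1ij.
have := s2_holders_bound hj' s2j' wj' nj' (two_valuedC s1ij).
have := card_holders_partition s1 neq; have := card_honest.
lia.
Qed.

End Execution.

Lemma eta_count2_two_valued (l n : nat) (w : 'I_n -> l.-tuple bool) (H : {set 'I_n})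
    (s : 'I_n -> bool) i j :
  i \in H -> j \in H -> s i -> s j -> w i != w j -> eta_count w H s = 2%N ->
  two_valued w H s (w i) (w j).
Proof.
move=> hi hj si sj neq eta2 z hz sz.
have sub : [set w i; w j] \subset [set w p | p in H & s p].
  by apply/subsetP => m; rewrite !inE => /orP [] /eqP ->; apply: imset_f; rewrite inE ?hi ?hj.
have /eqP eq_img : [set w i; w j] == [set w p | p in H & s p].
  by rewrite eqEcard sub cards2 neq; move: eta2; rewrite /eta_count => ->.
have : w z \in [set w p | p in H & s p] by apply: imset_f; rewrite inE hz.
by rewrite -eq_img !inE.
Qed.

Theorem lemma12 (t n l c : nat) (F : finFieldType) (alpha : nat -> F)
  (toF : c.-tuple bool -> F) (w : 'I_n -> l.-tuple bool) (H : {set 'I_n})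
  (adv1 : 'I_n -> 'I_n -> F * F) (adv2 adv3 : 'I_n -> 'I_n -> bool) :
  (3 * t + 1 <= n)%N ->
  is_c t n l c ->
  #|F| = (2 ^ c)%N ->
  bijective toF ->
  (forall i j : nat, (1 <= i <= n)%N -> (1 <= j <= n)%N -> alpha i = alpha j -> i = j) ->
  (forall i : nat, (1 <= i <= n)%N -> alpha i != 0%R) ->
  (#|~: H| <= t)%N ->
  eta_count w H (s2 t alpha toF w H adv1 adv2) = 2%N ->
  (eta_count w H (s3 t alpha toF w H adv1 adv2 adv3) <= 1)%N.
Proof.
move=> n_gt3t [/andP [l_le _] _] _ /bij_inj toF_inj alpha_inj _ dishonest_le eta2.
have label_inj : injective (fun p : 'I_n => alpha p.+1).
  by move=> p q /(alpha_inj p.+1 q.+1 (ltn_ord p) (ltn_ord q)) [] /val_inj.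
rewrite leqNgt; apply/negP => /card_gt1P [_ [_ [/imsetP [i + ->] /imsetP [j + ->] neq]]].
rewrite !inE => /andP [hi s3i] /andP [hj s3j].
have s2i : s2 t alpha toF w H adv1 adv2 i by case/andP: s3i.
have s2j : s2 t alpha toF w H adv1 adv2 j by case/andP: s3j.
have s2ij := eta_count2_two_valued hi hj s2i s2j neq eta2.
apply: (elimN eqP neq).
exact: s3_values_eq n_gt3t label_inj toF_inj l_le dishonest_le i j hi hj s3i s3j s2ij.
Qed.
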